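(* Let $Q_1,\dots,Q_k\colon\{0,1\}^m\to\{0,1\}$ and $Q^*\colon\{0,1\}^m\to S$ be functions with $S$ a finite set, and fix $\Gamma\colon\{0,1\}^k\times S\to\{0,1\}^n$. For $\sigma\in S$ let $\Gamma_\sigma\colon\{0,1\}^k\to\{0,1\}^n$ be $\Gamma_\sigma(x_1,\dots,x_k)=\Gamma(x_1,\dots,x_k,\sigma)$. Let $X$ be uniform on $\{0,1\}^m$ and $\mathcal{Y}$ a distribution on $\{0,1\}^n$ such that $\|\Gamma_\sigma(Q_1(X),\dots,Q_k(X))-\mathcal{Y}\|_{\mathtt{TV}}\ge1-\varepsilon$ for all $\sigma\in S$, and suppose $\Pr[Q^*(X)=\sigma]\ge\tau$ for all $\sigma\in S$. Then \[ \|\Gamma(Q_1(X),\dots,Q_k(X),Q^*(X))-\mathcal{Y}\|_{\mathtt{TV}}\ \ge\ 1-\frac{4\varepsilon|S|}{\tau}. \]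
   Context: Total variation distance: $\frac12\sum_x|\mathcal{D}_1(x)-\mathcal{D}_2(x)|$. *)

From mathcomp Require Import all_boot all_order all_algebra.
Set Implicit Arguments. Unset Strict Implicit. Unset Printing Implicit Defensive.
Import Order.TTheory GRing.Theory Num.Theory.
Local Open Scope ring_scope.

Definition bits (m : nat) := {ffun 'I_m -> bool}.

Definition is_distr (R : numDomainType) (T : finType) (D : {ffun T -> R}) : Prop :=
  (forall x, 0 <= D x) /\ \sum_(x : T) D x = 1.

Definition unif_push (R : numFieldType) (m : nat) (T : finType)
  (f : bits m -> T) : {ffun T -> R} :=
  [ffun y => #|[set x : bits m | f x == y]|%:R / (2 ^ m)%:R].

Definition unif_prob (R : numFieldType) (m : nat) (P : pred (bits m)) : R :=
  #|[set x : bits m | P x]|%:R / (2 ^ m)%:R.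

Definition tv_dist (R : numFieldType) (T : finType) (D1 D2 : {ffun T -> R}) : R :=
  2^-1 * \sum_(x : T) `|D1 x - D2 x|.

From mathcomp Require Import all_boot all_order all_algebra.
From mathcomp Require Import ring lra.
Import Order.TTheory GRing.Theory Num.Theory.
Local Open Scope ring_scope.

(* Between distributions, [tv_dist D Y = 1 - \sum_y min (D y) (Y y)], and the
   overlap [\sum_y min (D y) Y y] is subadditive in D.  Splitting the law of
   [Gamma (Q X) (Q* X)] along the value [sigma] of [Q* X] writes it as a sum of
   |S| pieces, the piece for [sigma] lying below the law of
   [Gamma_sigma (Q X)], whose overlap with Y is at most eps.  Hence the total
   overlap is at most |S| eps, which is below 4 eps |S| / tau as tau <= 1. *)

Section Overlap.
Set Implicit Arguments. Unset Strict Implicit.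
Variables (R : realFieldType) (T : finType).

Definition overlap (D1 D2 : {ffun T -> R}) : R :=
  \sum_x Num.min (D1 x) (D2 x).

Lemma tv_dist_overlap (D1 D2 : {ffun T -> R}) :
  \sum_x D1 x = 1 -> \sum_x D2 x = 1 -> tv_dist D1 D2 = 1 - overlap D1 D2.
Proof.
move=> D1_1 D2_1; rewrite /tv_dist /overlap.
under [in RHS]eq_bigr do rewrite minr_absE.
rewrite -mulr_suml !sumrB big_split /= D1_1 D2_1; by field.
Qed.

Lemma overlap_ge0 (D1 D2 : {ffun T -> R}) :
  (forall x, 0 <= D1 x) -> (forall x, 0 <= D2 x) -> 0 <= overlap D1 D2.
Proof.
by move=> D1_ge0 D2_ge0; apply: sumr_ge0 => x _; rewrite le_min D1_ge0 D2_ge0.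
Qed.

Lemma tv_dist_le1 (D1 D2 : {ffun T -> R}) :
  is_distr D1 -> is_distr D2 -> tv_dist D1 D2 <= 1.
Proof.
move=> [D1_ge0 D1_1] [D2_ge0 D2_1]; rewrite tv_dist_overlap //.
by rewrite lerBlDr lerDl overlap_ge0.
Qed.

Lemma minrD_le (a c b : R) : 0 <= a -> 0 <= c -> 0 <= b ->
  Num.min (a + c) b <= Num.min a b + Num.min c b.
Proof.
by case: (lerP a b); case: (lerP c b); case: (lerP (a + c) b) => *; lra.
Qed.

Lemma minr_sum_le (I : Type) (r : seq I) (F : I -> R) (b : R) :
  0 <= b -> (forall i, 0 <= F i) ->
  Num.min (\sum_(i <- r) F i) b <= \sum_(i <- r) Num.min (F i) b.
Proof.
move=> b_ge0 F_ge0; elim: r => [|i r IHr].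
  by rewrite !big_nil ge_min lexx.
rewrite !big_cons; apply: le_trans (lerD (lexx _) IHr).
by apply: minrD_le => //; apply: sumr_ge0.
Qed.

Lemma overlap_mixture_le (S : finType) (D Y : {ffun T -> R})
    (C : S -> T -> R) (P : S -> {ffun T -> R}) :
  (forall y, 0 <= Y y) -> (forall s y, 0 <= C s y <= P s y) ->
  (forall y, D y = \sum_s C s y) ->
  overlap D Y <= \sum_s overlap (P s) Y.
Proof.
move=> Y_ge0 C_bounds D_mix; rewrite /overlap exchange_big /=.
apply: ler_sum => y _; rewrite D_mix.
have C_ge0 s : 0 <= C s y by case/andP: (C_bounds s y).
apply: le_trans (minr_sum_le _ (Y_ge0 y) C_ge0) _.
by apply: ler_sum => s _; rewrite le_min2 //; case/andP: (C_bounds s y).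
Qed.

Lemma tv_dist_mixture_ge (S : finType) (D Y : {ffun T -> R})
    (C : S -> T -> R) (P : S -> {ffun T -> R}) (eps : R) :
  is_distr D -> is_distr Y -> (forall s, is_distr (P s)) ->
  (forall s y, 0 <= C s y <= P s y) -> (forall y, D y = \sum_s C s y) ->
  (forall s, 1 - eps <= tv_dist (P s) Y) ->
  1 - #|S|%:R * eps <= tv_dist D Y.
Proof.
move=> [_ D_1] [Y_ge0 Y_1] P_distr C_bounds D_mix P_far.
have overlap_P s : overlap (P s) Y <= eps.
  have [_ P_1] := P_distr s.
  by have := P_far s; rewrite tv_dist_overlap //; lra.
rewrite tv_dist_overlap // lerD2l lerN2.
apply: le_trans (overlap_mixture_le Y_ge0 C_bounds D_mix) _.
rewrite -sum1_card natr_sum mulr_suml.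
by apply: ler_sum => s _; rewrite mul1r.
Qed.

End Overlap.

Section UniformPush.
Set Implicit Arguments. Unset Strict Implicit.
Variables (R : realFieldType) (m : nat).

Lemma unif_probE (P : pred (bits m)) :
  unif_prob R P = (2 ^ m)%:R^-1 * \sum_x (P x)%:R.
Proof.
rewrite /unif_prob mulrC -sum1_card natr_sum big_mkcond /=.
by congr (_ * _); apply: eq_bigr => x _; rewrite inE; case: (P x).
Qed.

Lemma unif_push_prob (T : finType) (f : bits m -> T) (y : T) :
  unif_push R f y = unif_prob R (fun x => f x == y).
Proof. by rewrite ffunE. Qed.

Lemma unif_prob_ge0 (P : pred (bits m)) : 0 <= unif_prob R P.
Proof. by rewrite /unif_prob divr_ge0 ?ler0n. Qed.

Lemma unif_prob_subset (P P' : pred (bits m)) :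
  subpred P P' -> unif_prob R P <= unif_prob R P'.
Proof.
move=> PP'; rewrite !unif_probE ler_wpM2l ?invr_ge0 ?ler0n //.
by apply: ler_sum => x _; rewrite ler_nat; case: (P x) (PP' x) => // ->.
Qed.

Lemma unif_probT : unif_prob R (xpredT : pred (bits m)) = 1.
Proof.
rewrite unif_probE sumr_const card_ffun card_bool card_ord mulVf //.
by rewrite pnatr_eq0 -lt0n expn_gt0.
Qed.

Lemma unif_prob_le1 (P : pred (bits m)) : unif_prob R P <= 1.
Proof. by rewrite -unif_probT; apply: unif_prob_subset. Qed.

Lemma unif_prob_partition (S : finType) (g : bits m -> S) (P : pred (bits m)) :
  unif_prob R P = \sum_s unif_prob R (fun x => (g x == s) && P x).
Proof.
rewrite unif_probE; under [in RHS]eq_bigr do rewrite unif_probE.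
rewrite -mulr_sumr exchange_big /=; congr (_ * _); apply: eq_bigr => x _.
rewrite (bigD1 (g x)) //= eqxx big1 ?addr0 // => s.
by rewrite eq_sym => /negbTE ->.
Qed.

Lemma unif_push_distr (T : finType) (f : bits m -> T) :
  is_distr (unif_push R f).
Proof.
split=> [y|]; first by rewrite unif_push_prob unif_prob_ge0.
rewrite -unif_probT (unif_prob_partition f).
apply: eq_bigr => y _; rewrite unif_push_prob !unif_probE.
by under [in RHS]eq_bigr do rewrite /= andbT.
Qed.

Lemma unif_push_select (S T : finType) (f : bits m -> S -> T)
    (g : bits m -> S) (y : T) :
  unif_push R (fun x => f x (g x)) y
  = \sum_s unif_prob R (fun x => (g x == s) && (f x s == y)).
Proof.
rewrite unif_push_prob (unif_prob_partition g); apply: eq_bigr => s _.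
rewrite !unif_probE; congr (_ * _); apply: eq_bigr => x _.
by case: eqP => // ->.
Qed.

End UniformPush.

Theorem lemma3p6 (R : realFieldType) (m k n : nat) (S : finType)
  (Q : 'I_k -> bits m -> bool) (Qstar : bits m -> S)
  (Gamma : bits k -> S -> bits n)
  (Y : {ffun bits n -> R}) (eps tau : R) :
  is_distr Y ->
  0 < tau ->
  (forall sigma : S,
     tv_dist (unif_push R (fun x => Gamma [ffun i => Q i x] sigma)) Y >= 1 - eps) ->
  (forall sigma : S, unif_prob R (fun x => Qstar x == sigma) >= tau) ->
  tv_dist (unif_push R (fun x => Gamma [ffun i => Q i x] (Qstar x))) Y
    >= 1 - 4 * eps * #|S|%:R / tau.
Proof.
move=> Y_distr tau_gt0 Gamma_far Qstar_mass.
pose F x sigma := Gamma [ffun i => Q i x] sigma.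
have sigma0 : S := Qstar [ffun=> false].
have tau_le1 : tau <= 1 := le_trans (Qstar_mass sigma0) (unif_prob_le1 _ _).
have eps_ge0 : 0 <= eps.
  have := tv_dist_le1 (unif_push_distr R (F^~ sigma0)) Y_distr.
  move/(le_trans (Gamma_far sigma0)).
  by rewrite lerBlDr lerDl.
pose C sigma y := unif_prob R (fun x => (Qstar x == sigma) && (F x sigma == y)).
have C_bounds sigma y : 0 <= C sigma y <= unif_push R (F^~ sigma) y.
  by rewrite unif_prob_ge0 unif_push_prob unif_prob_subset // => x /andP[].
have := tv_dist_mixture_ge (unif_push_distr _ _) Y_distr
  (fun sigma => unif_push_distr _ _) C_bounds (unif_push_select R F Qstar)
  Gamma_far.
apply: le_trans; rewrite lerD2l lerN2.
have -> : 4 * eps * #|S|%:R / tau = #|S|%:R * eps * (4 / tau) by ring.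
rewrite ler_peMr ?mulr_ge0 ?ler0n // ler_pdivlMr // mul1r.
lra.
Qed.
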